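(* As $v\to\infty$, $f'(v)\ge(1+o(1))v^2/12$; consequently, as $t\to\infty$, $f(t)\le(\sqrt{12}+o(1))\sqrt{t}$.
   Context: For $[k]=\{0,\dots,k-1\}$ and $K\ge k$, the addition table of $[k]$ as a subset of $\mathbb{Z}_K$ is the set of triples (faces) $(a,b,a+b\bmod K)$, $a,b\in[k]$, viewed as a tripartite 3-uniform hypergraph whose vertices are rows, columns and labels (three disjoint vertex classes). A set of vertices spans a face if all three vertices of the face are in the set. $f'(v)$ is the maximal number of faces that can be spanned by a set of $v$ vertices in the addition table of $[k]\subset\mathbb{Z}_K$, for any $K\ge k$ with $k$ sufficiently large compared to $v$. An $(r,s)$-configuration is a collection of $s$ faces involving at most $r$ vertices in total. $f(t)$ is the least integer $r$ such that the addition table of $[k]\subset\mathbb{Z}_K$ contains an $(r,t)$-configuration for all $K\ge k$ with $k$ sufficiently large compared to $t$. *)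

From HB Require Import structures.
From mathcomp Require Import all_boot all_order all_algebra.
From mathcomp Require Import boolp reals.
Set Implicit Arguments. Unset Strict Implicit. Unset Printing Implicit Defensive.

(* Addition table of [k] = {0,...,k-1} inside Z_K (K >= k).
   Faces: (a, b, (a+b) mod K) with a b : 'I_k.  A face is determined by
   its row a and column b; its label is [lab K a b].
   Vertices: rows ('I_k), columns ('I_k), labels ('I_K), three disjoint
   classes.  A vertex set is a triple (A, B, C). *)

Definition lab (K a b : nat) : nat := (a + b) %% K.

Definition spanned (k K : nat) (A B : {set 'I_k}) (C : {set 'I_K}) : nat :=
  #|[set p : 'I_k * 'I_k | [&& p.1 \in A, p.2 \in B &
       [exists c in C, val c == lab K p.1 p.2]]]|.

Definition nverts (k K : nat) (F : {set 'I_k * 'I_k}) : nat :=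
  #|[set p.1 | p in F]| + #|[set p.2 | p in F]|
  + #|[set c : 'I_K | [exists p in F, val c == lab K p.1 p.2]]|.

Definition fprime_at_least (v s : nat) : Prop :=
  exists k0, forall k K, (k0 <= k)%N -> (k <= K)%N ->
    exists (A B : {set 'I_k}) (C : {set 'I_K}),
      #|A| + #|B| + #|C| = v /\ (s <= spanned A B C)%N.

(* f'(v): the maximal such s.  Since a set of v vertices spans at most
   v*v faces, the maximum can be taken over s <= v*v. *)
Definition fprime (v : nat) : nat :=
  \max_(s < (v * v).+1 | `[< fprime_at_least v s >]) s.

Definition has_config (t r : nat) : Prop :=
  exists k0, forall k K, (k0 <= k)%N -> (k <= K)%N ->
    exists F : {set 'I_k * 'I_k}, #|F| = t /\ (nverts K F <= r)%N.

(* f(t): the least such r.  There is always a (3t, t)-configuration, so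
   the minimum is over r <= 3t (with default 3t). *)
Definition f (t : nat) : nat :=
  \big[minn/(3 * t)]_(r < (3 * t).+1 | `[< has_config t r >]) r.

(* Take rows and columns [0, 2m) and labels [m, 3m) with k >= 4m, so that no sum a + b
   wraps around modulo K.  The face (a, b) is spanned iff m <= a + b < 3m, and rows a and
   m + a together contain exactly 3m such faces: these 6m vertices span 3m^2 faces.  Hence
   f'(v) >= 3 (v / 6)^2, and any t <= 3m^2 of these faces form a (6m, t)-configuration,
   so f(t) <= 6m with m about sqrt (t / 3). *)

From HB Require Import structures.
From mathcomp Require Import all_boot all_order all_algebra.
From mathcomp Require Import boolp reals zify ring lra.

Import Order.TTheory GRing.Theory Num.Theory.

Set Implicit Arguments.
Unset Strict Implicit.
Unset Printing Implicit Defensive.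

Definition ord_interval n lo hi : {set 'I_n} := [set i : 'I_n | lo <= i < hi].

Definition spanned_faces k K (A B : {set 'I_k}) (C : {set 'I_K}) : {set 'I_k * 'I_k} :=
  [set p | [&& p.1 \in A, p.2 \in B & [exists c in C, val c == lab K p.1 p.2]]].

Lemma sum_nat_interval n lo hi :
  \sum_(0 <= i < n) (lo <= i < hi : nat) = minn n hi - minn n lo.
Proof.
elim: n => [|n IHn]; first by rewrite big_geq //; lia.
by rewrite big_nat_recr //= IHn; case: (leqP lo n); case: (ltnP n hi) => /=; lia.
Qed.

Lemma sum_ord_interval0 k n (F : nat -> nat) : n <= k ->
  \sum_(i in ord_interval k 0 n) F i = \sum_(0 <= i < n) F i.
Proof.
move=> le_nk; rewrite big_mkord (big_ord_widen_cond k xpredT) //.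
by apply: eq_bigl => i; rewrite inE.
Qed.

Lemma card_ord_interval n lo hi : hi <= n -> #|ord_interval n lo hi| = hi - lo.
Proof.
move=> le_hi_n; rewrite -sum1dep_card.
transitivity (\sum_(0 <= i < n) (lo <= i < hi : nat)); last by rewrite sum_nat_interval; lia.
by rewrite big_mkcond big_mkord; apply: eq_bigr => i _; case: ifP.
Qed.

Lemma exists_ord_interval K lo hi x : x < K ->
  [exists c in ord_interval K lo hi, val c == x] = (lo <= x < hi).
Proof.
move=> ltxK; apply/existsP/idP => [[c /andP[]]|x_in]; first by rewrite inE => c_in /eqP <-.
by exists (Ordinal ltxK); rewrite inE /= x_in eqxx.
Qed.

Lemma band_count m :
  \sum_(0 <= a < 2 * m) \sum_(0 <= b < 2 * m) (m <= a + b < 3 * m : nat) = 3 * m * m.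
Proof.
have row_count a : \sum_(0 <= b < 2 * m) (m <= a + b < 3 * m : nat)
    = minn (2 * m) (3 * m - a) - minn (2 * m) (m - a).
  rewrite -sum_nat_interval; apply: eq_bigr => b _.
  by rewrite leq_subLR ltn_subRL.
rewrite (big_cat_nat _ (n := m)) /=; [|lia|lia].
rewrite (big_addn 0 (2 * m) m) (_ : 2 * m - m = m); last lia.
rewrite -big_split /=.
rewrite (eq_big_nat _ _ (F2 := fun => 3 * m)) ?sum_nat_const_nat; first lia.
by move=> a /andP[_ lt_am]; rewrite !row_count; lia.
Qed.

Lemma spanned_sum k K (A B : {set 'I_k}) (C : {set 'I_K}) :
  spanned A B C = \sum_(a in A) \sum_(b in B) [exists c in C, val c == lab K a b].
Proof.
rewrite /spanned -sum1dep_card pair_big_dep /= big_mkcond [RHS]big_mkcond /=.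
by apply: eq_bigr => -[a b] _ /=; do 2 case: (_ \in _) => //=; case: existsP.
Qed.

Lemma spanned_band m k K : 4 * m <= k -> k <= K ->
  spanned (ord_interval k 0 (2 * m)) (ord_interval k 0 (2 * m)) (ord_interval K m (3 * m))
  = 3 * m * m.
Proof.
move=> le_4m_k le_kK; rewrite spanned_sum -band_count -(sum_ord_interval0 (k := k)); last lia.
apply: eq_bigr => a; rewrite inE => /andP[_ lt_a].
rewrite -(sum_ord_interval0 (k := k)); last lia.
apply: eq_bigr => b; rewrite inE => /andP[_ lt_b].
by rewrite /lab modn_small ?exists_ord_interval //; lia.
Qed.

Lemma spanned_subset k K (A B : {set 'I_k}) (C C' : {set 'I_K}) :
  C \subset C' -> spanned A B C <= spanned A B C'.
Proof.
move=> sCC'; apply/subset_leq_card/subsetP => p; rewrite !inE => /and3P[-> -> /=].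
by case/existsP=> c /andP[c_in lab_c]; apply/existsP; exists c; rewrite (subsetP sCC').
Qed.

Lemma nverts_spanned_faces k K (A B : {set 'I_k}) (C : {set 'I_K}) (F : {set 'I_k * 'I_k}) :
  F \subset spanned_faces A B C -> nverts K F <= #|A| + #|B| + #|C|.
Proof.
move=> sFS; have F_spanned p : p \in F -> [&& p.1 \in A, p.2 \in B &
    [exists c in C, val c == lab K p.1 p.2]] by move/(subsetP sFS); rewrite inE.
rewrite /nverts !leq_add //; apply/subset_leq_card/subsetP => x.
- by case/imsetP=> p /F_spanned /and3P[] ? _ _ ->.
- by case/imsetP=> p /F_spanned /and3P[] _ ? _ ->.
rewrite inE => /existsP[p /andP[/F_spanned /and3P[_ _ /existsP[c /andP[c_in /eqP lab_c]]] /eqP lab_x]].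
by rewrite (val_inj (etrans lab_x (esym lab_c))).
Qed.

Lemma exists_faces_nverts k K (A B : {set 'I_k}) (C : {set 'I_K}) t :
  t <= spanned A B C ->
  exists F : {set 'I_k * 'I_k}, #|F| = t /\ nverts K F <= #|A| + #|B| + #|C|.
Proof.
case/card_geqP=> s [uniq_s size_s sub_s]; exists [set p in s]; split.
  by rewrite cardsE (card_uniqP uniq_s).
by apply: nverts_spanned_faces; apply/subsetP => p; rewrite inE => /sub_s.
Qed.

(* Rows and columns [0, 2m), labels [m, 3m + v mod 6): with [m = v / 6] these are [v] vertices. *)
Lemma fprime_at_least_band v : fprime_at_least v (3 * (v %/ 6) * (v %/ 6)).
Proof.
set m := v %/ 6; have v_eq := divn_eq v 6; have := ltn_pmod v (isT : 0 < 6) => lt_r.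
exists v => k K le_vk le_kK.
exists (ord_interval k 0 (2 * m)), (ord_interval k 0 (2 * m)),
  (ord_interval K m (3 * m + v %% 6)).
rewrite !card_ord_interval; [split|lia|lia]; first lia.
rewrite -(spanned_band (k := k) (K := K)); [|lia|lia].
by apply/spanned_subset/subsetP => c; rewrite !inE => /andP[-> lt_c]; lia.
Qed.

Lemma has_config_band t m : t <= 3 * m * m -> has_config t (6 * m).
Proof.
move=> le_t; exists (4 * m) => k K le_4m_k le_kK.
rewrite -(spanned_band le_4m_k le_kK) in le_t.
have [F [card_F nverts_F]] := exists_faces_nverts le_t.
by exists F; split; rewrite // !card_ord_interval in nverts_F; lia.
Qed.

Lemma leq_fprime v s : fprime_at_least v s -> s <= v * v -> s <= fprime v.
Proof.
rewrite -ltnS => at_least_s lt_s.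
by apply: (leq_bigmax_cond (Ordinal lt_s)); apply/asboolP.
Qed.

Lemma f_leq t r : has_config t r -> f t <= r.
Proof.
move=> config_r; rewrite /f -minEnat; case: (leqP r (3 * t)) => [|lt_3t_r]; last first.
  exact: leq_trans (@bigmin_le_id _ nat _ _ _ _ _) (ltnW lt_3t_r).
rewrite -ltnS => lt_r.
exact: (@ge_bigmin_seq _ nat _ _ _ (Ordinal lt_r) _ _ (mem_index_enum _) (asboolT config_r)).
Qed.

Lemma fprime_lower v : v * v <= 12 * fprime v + 10 * v.
Proof.
have v_eq := divn_eq v 6; have := ltn_pmod v (isT : 0 < 6) => lt_r.
have := leq_fprime (fprime_at_least_band v); nia.
Qed.

Local Open Scope ring_scope.

(* [u = sqrt (t / 3)], so the band of width [m = floor u + 1] has at least [t] faces. *)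
Lemma f_upper (R : realType) t :
  (f t)%:R <= Num.sqrt 12 * Num.sqrt t%:R + 6 :> R.
Proof.
set u : R := Num.sqrt 12 * Num.sqrt t%:R / 6.
have u_ge0 : 0 <= u by rewrite divr_ge0 ?mulr_ge0 ?sqrtr_ge0.
have t_eq : t%:R = 3 * u ^+ 2.
  by rewrite /u expr_div_n exprMn !sqr_sqrtr ?ler0n //; field.
set m := (Num.truncn u).+1.
have lt_um : u < m%:R := truncnS_gt u.
have le_mu : m%:R <= u + 1 by rewrite /m -natr1 lerD2r truncn_le.
have le_t : (t <= 3 * m * m)%N by rewrite -(ler_nat R) !natrM t_eq; nra.
apply: (@le_trans _ _ (6 * m)%N%:R); first by rewrite ler_nat; apply/f_leq/has_config_band.
have -> : Num.sqrt 12 * Num.sqrt t%:R = 6 * u by rewrite /u; field.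
rewrite natrM; lra.
Qed.

Lemma eventually_le_mul_nat (R : archiRealFieldType) (eps c : R) : 0 < eps ->
  exists N : nat, forall n : nat, (N <= n)%N -> c <= eps * n%:R.
Proof.
move=> eps_gt0; exists (Num.truncn (c / eps)).+1 => n le_Nn.
rewrite -ler_pdivrMl // mulrC.
by apply/ltW/(lt_le_trans (truncnS_gt _)); rewrite ler_nat.
Qed.

Theorem proposition1 (R : realType) :
  (forall eps : R, 0 < eps -> exists v0 : nat, forall v : nat, (v0 <= v)%N ->
      (1 - eps) * ((v%:R : R) ^+ 2 / 12) <= (fprime v)%:R)
  /\
  (forall eps : R, 0 < eps -> exists t0 : nat, forall t : nat, (t0 <= t)%N ->
      (f t)%:R <= (Num.sqrt (12 : R) + eps) * Num.sqrt (t%:R : R)).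
Proof.
split=> eps eps_gt0.
- have [N le_N] := eventually_le_mul_nat 10 eps_gt0.
  exists N => v /le_N ten_le.
  have := fprime_lower v; rewrite -(ler_nat R) natrD !natrM.
  rewrite expr2; nra.
- have [N le_N] := eventually_le_mul_nat 6 eps_gt0.
  exists (N * N)%N => t le_t; have six_le := le_N N (leqnn N).
  have le_sqrt : N%:R <= Num.sqrt t%:R :> R.
    by rewrite -[N%:R]ger0_norm // -sqrtr_sqr ler_sqrt // expr2 -natrM ler_nat.
  have := f_upper R t; have := sqrtr_ge0 (12 : R); nra.
Qed.
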